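(* Let $\mathcal{A}$ be a complex subspace arrangement in $\mathbb{C}^l$ and $x_0\in\mathcal{A}$. Let $\mathcal{A}'=\mathcal{A}\setminus\{x_0\}$, $\widetilde{\mathcal{A}''}=\{x_0\cap y\mid y\in\mathcal{A}'\}$ (a finite set of linear subspaces of $x_0$), and let $\mathcal{A}''\subseteq\widetilde{\mathcal{A}''}$ be the set of those elements of $\widetilde{\mathcal{A}''}$ that are not properly contained in another element of $\widetilde{\mathcal{A}''}$. Fix any linear order on $\widetilde{\mathcal{A}''}$ and give $\mathcal{A}''$ the induced order. Then the natural inclusion $D(\mathcal{A}'')\hookrightarrow D(\widetilde{\mathcal{A}''})$ (both complexes formed with ambient space $W=x_0$) is a quasi-isomorphism.
   Context: A (complex) subspace arrangement in $\mathbb{C}^l$ is a finite set $\mathcal{A}$ of complex linear subspaces of $\mathbb{C}^l$ such that there are no distinct $x,y\in\mathcal{A}$ with $x\subset y$. For a finite set $\mathcal{C}$ of linear subspaces of a complex vector space $W$, equipped with a linear order, $D(\mathcal{C})$ denotes the cochain complex over $\mathbb{Q}$ with basis all subsets $\sigma\subseteq\mathcal{C}$, where, writing $\vee\sigma=\bigcap_{x\in\sigma}x$ (with $\vee\emptyset=W$), $\deg\sigma=2\operatorname{codim}_W(\vee\sigma)-|\sigma|$, and for $\sigma=\{x_{i_1},\dots,x_{i_r}\}$ listed in increasing order, $d\sigma=\sum_{j:\vee(\sigma\setminus\{x_{i_j}\})=\vee\sigma}(-1)^j(\sigma\setminus\{x_{i_j}\})$. For $\mathcal{C}'\subseteq\mathcal{C}$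 with induced order, $D(\mathcal{C}')$ is the subcomplex of $D(\mathcal{C})$ spanned by subsets of $\mathcal{C}'$. *)

From HB Require Import structures.
From mathcomp Require Import all_boot all_order all_algebra.
From mathcomp Require Import reals complex.
Set Implicit Arguments. Unset Strict Implicit. Unset Printing Implicit Defensive.
Import Order.TTheory GRing.Theory Num.Theory.
Local Open Scope ring_scope.

Definition Cspace (R : realType) (l : nat) := 'rV[R[i]]_l.

Definition subspace_arrangement (F : fieldType) (V : vectType F)
  (A : seq {vspace V}) : Prop :=
  uniq A /\ forall x y, x \in A -> y \in A -> (x <= y)%VS -> x = y.

Definition proper_subv (F : fieldType) (V : vectType F) (x y : {vspace V}) : bool :=
  (x <= y)%VS && (x != y).

Section DComplex.
Variables (F : fieldType) (V : vectType F).
(* Ambient space W, and a linearly ordered finite family c : 'I_n -> subspaces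
   of W (the order is the order of 'I_n). *)
Variables (W : {vspace V}) (n : nat) (c : 'I_n -> {vspace V}).

Definition Djoin (s : {set 'I_n}) : {vspace V} :=
  (W :&: \bigcap_(i in s) c i)%VS.

Definition Ddeg (s : {set 'I_n}) : int :=
  ((2 * (\dim W - \dim (Djoin s)))%N)%:Z - (#|s|)%:Z.

(* 1-based position of i in sigma listed in increasing order *)
Definition Dpos (i : 'I_n) (s : {set 'I_n}) : nat := #|[set k in s | (k <= i)%N]|.

(* cochains: Q-linear combinations of basis elements sigma *)
Definition cochain := {ffun {set 'I_n} -> rat}.

(* d sigma = sum_{j : \/(sigma \ x_{i_j}) = \/ sigma} (-1)^j (sigma \ x_{i_j}),
   extended linearly. *)
Definition Dd (f : cochain) : cochain :=
  [ffun t => \sum_(s : {set 'I_n})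
      \sum_(i in s | (t == s :\ i) && (Djoin (s :\ i) == Djoin s))
         (-1) ^+ (Dpos i s) * f s].

Definition homog (k : int) (f : cochain) : Prop :=
  forall s, f s != 0 -> Ddeg s = k.

(* f lies in the subcomplex D(C') spanned by subsets of C' = {c i | P i} *)
Definition supported (P : pred 'I_n) (f : cochain) : Prop :=
  forall s, f s != 0 -> s \subset P.

(* The inclusion D(C') -> D(C) induces an isomorphism on every cohomology group
   H^k = ker d_k / im d_{k-1}. *)
Definition incl_quasi_iso (P : pred 'I_n) : Prop :=
  forall k : int,
    (* surjective on H^k *)
    (forall z, homog k z -> Dd z = 0 ->
       exists z' w, [/\ homog k z', supported P z', Dd z' = 0,
                        homog (k - 1) w & z - z' = Dd w])
    /\
    (* injective on H^k *)
    (forall z, homog k z -> supported P z -> Dd z = 0 ->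
       forall w, homog (k - 1) w -> z = Dd w ->
       exists w', [/\ homog (k - 1) w', supported P w' & z = Dd w']).
End DComplex.

(* If [W :&: c i <= c j] for some [j != i], then adding or removing [j] does
   not change the join of a face containing [i], and the operator [h] with
   [(h f) s = +-f (s :\ j)] for [i, j \in s] satisfies [d h + h d = id] on
   faces containing [i]. Correcting a cocycle [z] of D(Q) by [d (h z)], and a
   primitive [w] of a cocycle of D(P) by [d (h w)], kills the faces containing
   [i], so dropping such a redundant index from [Q] does not change cohomology.
   Every non-maximal element of the family lies in a maximal one, so dropping
   the non-maximal indices one at a time leads from D(A''~) to D(A''). *)

From HB Require Import structures.
From mathcomp Require Import all_boot all_order all_algebra.
From mathcomp Require Import reals complex.
Set Implicit Arguments. Unset Strict Implicit. Unset Printing Implicit Defensive.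
Import Order.TTheory GRing.Theory Num.Theory.
Local Open Scope ring_scope.

Lemma sum_antisym_eq0 (R : numDomainType) (I : finType) (G : I -> I -> R) :
  (forall x y, G x y = - G y x) -> \sum_x \sum_y G x y = 0.
Proof.
move=> GN; set S := \sum_x _.
have SN : S = - S.
  rewrite {1}/S exchange_big -sumrN; apply: eq_bigr => y _.
  by rewrite -sumrN; apply: eq_bigr => x _.
have : S *+ 2 == 0 by rewrite mulr2n {1}SN addNr.
by rewrite mulrn_eq0 => /eqP.
Qed.

Lemma sumr_neq0P (R : nmodType) (I : finType) (P : pred I) (F : I -> R) :
  \sum_(i | P i) F i != 0 -> exists2 i, P i & F i != 0.
Proof.
have [i /andP[Pi Fi] _|noF] := pickP [pred i | P i && (F i != 0)]; first by exists i.
by rewrite big1 ?eqxx // => i Pi; apply/eqP; move: (noF i); rewrite /= Pi => /negbFE.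
Qed.

Section DComplex.
Variables (F : fieldType) (V : vectType F) (W : {vspace V}) (n : nat)
  (c : 'I_n -> {vspace V}).
Local Notation Dj := (Djoin W c).
Local Notation D := (Dd W c).
Implicit Types (x y : 'I_n) (s t : {set 'I_n}) (f g : cochain n).

Lemma Djoin_setU1 x s : x \notin s -> Dj (x |: s) = (Dj s :&: c x)%VS.
Proof. by move=> xNs; rewrite /Djoin big_setU1 //= [(c x :&: _)%VS]capvC capvA. Qed.

Lemma Djoin_setU1_id x s : x \notin s -> (Dj s <= c x)%VS -> Dj (x |: s) = Dj s.
Proof. by move=> xNs /capv_idPl sx; rewrite Djoin_setU1. Qed.

Lemma Djoin_sub x s : x \in s -> (Dj s <= W :&: c x)%VS.
Proof.
move=> xs; rewrite subv_cap /Djoin capvSl /=.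
by apply: subv_trans (capvSr _ _) _; rewrite (bigD1 x) //= capvSl.
Qed.

Lemma Ddeg_setU1 x s : x \notin s -> (Dj s <= c x)%VS ->
  Ddeg W c (x |: s) = Ddeg W c s - 1.
Proof.
move=> xNs sx; rewrite /Ddeg Djoin_setU1_id // cardsU1 xNs /=.
by rewrite addnC PoszD opprD addrA.
Qed.

Lemma Dpos_setU1 x a s : a \notin s -> Dpos x (a |: s) = ((a <= x)%N + Dpos x s)%N.
Proof.
have cnt A : Dpos x A = (\sum_(k in A) (k <= x))%N.
  rewrite /Dpos -sum1_card (eq_bigl (fun k => (k \in A) && (k <= x)%N)).
    by rewrite big_mkcondr /=; apply: eq_bigr => k _; case: (k <= x)%N.
  by move=> k; rewrite inE.
by move=> aNs; rewrite !cnt big_setU1.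
Qed.

Lemma leq_ord_swap x y : x != y -> (y <= x)%N = ~~ (x <= y)%N.
Proof. by move=> xy; rewrite leqNgt ltn_neqAle -[nat_of_ord x == _]/(x == y) xy. Qed.

Lemma Dpos_setU1C {x a s} : a != x -> a \notin s ->
  Dpos x (x |: (a |: s)) = ((a <= x)%N + Dpos x (x |: s))%N.
Proof. by move=> ax aNs; rewrite setUCA Dpos_setU1 // !inE negb_or ax. Qed.

Section SignSwap.
Variables (x y : 'I_n) (s : {set 'I_n}).
Hypotheses (xy : x != y) (xNs : x \notin s) (yNs : y \notin s).

Let yx : y != x. Proof. by rewrite eq_sym. Qed.

Lemma Dsign_pair :
  (-1) ^+ Dpos x (x |: (y |: s)) * (-1) ^+ Dpos y (y |: (x |: s)) =
  - ((-1) ^+ Dpos x (x |: s) * (-1) ^+ Dpos y (y |: s)) :> rat.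
Proof.
rewrite (Dpos_setU1C xy xNs) (Dpos_setU1C yx yNs) !exprD leq_ord_swap // signrN.
by rewrite !mulNr mulrACA -expr2 sqrr_sign mul1r.
Qed.

Lemma Dsign_swap :
  (-1) ^+ Dpos x (x |: s) * (-1) ^+ Dpos y (y |: (x |: s)) =
  - ((-1) ^+ Dpos y (y |: s) * (-1) ^+ Dpos x (x |: (y |: s))) :> rat.
Proof.
rewrite (Dpos_setU1C xy xNs) (Dpos_setU1C yx yNs) !exprD leq_ord_swap // signrN.
by rewrite mulNr mulrN mulrCA [in RHS]mulrCA (mulrC (_ ^+ Dpos y _)).
Qed.

End SignSwap.

Lemma Dd_cofaces f t : D f t =
  \sum_(x | (x \notin t) && (Dj t <= c x)%VS) (-1) ^+ Dpos x (x |: t) * f (x |: t).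
Proof.
rewrite ffunE (eq_bigr (fun s => \sum_x if (x \in s) && ((t == s :\ x) &&
  (Dj (s :\ x) == Dj s)) then (-1) ^+ Dpos x s * f s else 0)); last first.
  by move=> s _; rewrite big_mkcond.
rewrite exchange_big [RHS]big_mkcond; apply: eq_bigr => x _ /=.
rewrite (bigD1 (x |: t)) //= big1 ?addr0 => [|s /negbTE sNxt]; last first.
  by case: ifP => // /and3P[xs /eqP tE _]; rewrite tE setD1K ?eqxx in sNxt.
rewrite setU11; have [xt|xNt] /= := boolP (x \in t).
  by case: eqP => // tE; move: (setD11 x (x |: t)); rewrite -tE xt.
rewrite setU1K // eqxx Djoin_setU1 //=; congr (if _ then _ else _).
by apply/eqP/idP => [->|/capv_idPl ->]; first exact: capvSr.
Qed.

Lemma cochainB f g t : (f - g) t = f t - g t.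
Proof. by rewrite !ffunE. Qed.

Lemma cochainD f g t : (f + g) t = f t + g t.
Proof. by rewrite !ffunE. Qed.

Lemma DdB f g : D (f - g) = D f - D g.
Proof.
apply/ffunP => t; rewrite cochainB !Dd_cofaces -sumrB.
by apply: eq_bigr => x _; rewrite cochainB mulrBr.
Qed.

Lemma DdD f g : D (f + g) = D f + D g.
Proof.
apply/ffunP => t; rewrite cochainD !Dd_cofaces -big_split.
by apply: eq_bigr => x _; rewrite cochainD mulrDr.
Qed.

Lemma Dd0 : D 0 = 0.
Proof.
by apply/ffunP => t; rewrite Dd_cofaces ffunE big1 // => x _; rewrite ffunE mulr0.
Qed.

Lemma DdK f : D (D f) = 0.
Proof.
apply/ffunP => t; rewrite [RHS]ffunE Dd_cofaces.
pose C x := (x \notin t) && (Dj t <= c x)%VS.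
pose G x y : rat := if [&& x != y, C x & C y]
  then (-1) ^+ Dpos x (x |: t) * (-1) ^+ Dpos y (y |: (x |: t)) * f (y |: (x |: t))
  else 0.
transitivity (\sum_x \sum_y G x y); last first.
  apply: sum_antisym_eq0 => x y; rewrite /G [y == x]eq_sym [C y && _]andbC.
  case: ifP => [/and3P[xy /andP[xNt _] /andP[yNt _]]|_]; last by rewrite oppr0.
  by rewrite Dsign_swap // [y |: (x |: t)]setUCA mulNr.
rewrite [LHS]big_mkcond; apply: eq_bigr => x _; rewrite /G -/(C x).
have [Cx|] := boolP (C x).
  have [xNt tx] := andP Cx.
  rewrite Dd_cofaces Djoin_setU1_id // mulr_sumr [LHS]big_mkcond; apply: eq_bigr => y _.
  rewrite /C !inE negb_or [y == x]eq_sym -andbA mulrA.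
  by case: ifP.
by move=> _; rewrite big1 // => y _; rewrite andbF.
Qed.

(* [homog W c k] and [supported P] are both of this form. *)
Definition supp_within (Q : {set 'I_n} -> Prop) f := forall s, f s != 0 -> Q s.

Lemma supp_within0 Q : supp_within Q 0.
Proof. by move=> s; rewrite ffunE eqxx. Qed.

Lemma supp_withinD Q f g : supp_within Q f -> supp_within Q g -> supp_within Q (f + g).
Proof.
move=> Qf Qg s; rewrite ffunE; have [->|/Qf //] := eqVneq (f s) 0.
by rewrite add0r => /Qg.
Qed.

Lemma supp_withinB Q f g : supp_within Q f -> supp_within Q g -> supp_within Q (f - g).
Proof.
by move=> Qf Qg; apply: supp_withinD Qf _ => s; rewrite ffunE oppr_eq0; apply: Qg.
Qed.

Lemma Dd_supp_within (Q Q' : {set 'I_n} -> Prop) f :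
    (forall x t, x \notin t -> (Dj t <= c x)%VS -> Q (x |: t) -> Q' t) ->
  supp_within Q f -> supp_within Q' (D f).
Proof.
move=> QQ' fQ t; rewrite Dd_cofaces => /sumr_neq0P[x /andP[xNt tx]].
by rewrite mulf_eq0 negb_or => /andP[_ /fQ]; apply: QQ'.
Qed.

Lemma Dd_homog k f : homog W c k f -> homog W c (k + 1) (D f).
Proof.
by apply: Dd_supp_within => x t xNt tx; rewrite Ddeg_setU1 // => <-; rewrite subrK.
Qed.

Lemma Dd_supported (P : pred 'I_n) f : supported P f -> supported P (D f).
Proof. by apply: Dd_supp_within => x t _ _; apply: subset_trans (subsetUr _ _). Qed.

Section Homotopy.
Variables (i j : 'I_n).
Hypotheses (ij : i != j) (sub_ij : (W :&: c i <= c j)%VS).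

Definition Dhop f : cochain n := [ffun t : {set 'I_n} =>
  if (i \in t) && (j \in t) then (-1) ^+ Dpos j t * f (t :\ j) else 0].

Lemma Djoin_sub_hop t : i \in t -> (Dj t <= c j)%VS.
Proof. by move=> it; apply: subv_trans (Djoin_sub it) sub_ij. Qed.

Lemma Dhop_setU1 f s : i \in s -> j \notin s ->
  D (Dhop f) (j |: s) + Dhop (D f) (j |: s) = f (j |: s).
Proof.
move=> i_s jNs; have ijs : i \in j |: s by rewrite setU1r.
rewrite [Dhop (D f) _]ffunE ijs setU11 setU1K //=.
rewrite !Dd_cofaces Djoin_setU1_id ?Djoin_sub_hop //.
rewrite [in X in _ + X](bigD1 j) /=; last by rewrite jNs Djoin_sub_hop.
rewrite mulrDr signrMK addrCA -[RHS]addr0; congr (_ + _).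
apply/eqP; rewrite addr_eq0 mulr_sumr -sumrN; apply/eqP.
apply: eq_big => [y|y /andP[yNjs _]].
  by rewrite !inE negb_or; case: (y == j); rewrite /= ?andbT ?andbF.
have [yj yNs] : y != j /\ y \notin s by apply/andP; rewrite -negb_or -in_setU1.
have jy : j != y by rewrite eq_sym.
have jNys : j \notin y |: s by rewrite !inE negb_or jy.
rewrite ffunE !inE eqxx i_s !orbT /= [in _ :\ j]setUCA setU1K // [in Dpos j _]setUCA.
by rewrite mulrA [_ * _ ^+ Dpos j _]mulrC (Dsign_pair jy) // mulNr mulrA.
Qed.

Lemma Dhop_homotopy f t : i \in t -> D (Dhop f) t + Dhop (D f) t = f t.
Proof.
move=> it; have [jt|jNt] := boolP (j \in t).
  by rewrite -(setD1K jt) Dhop_setU1 // ?setD11 // in_setD1 ij.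
rewrite [Dhop (D f) t]ffunE it (negbTE jNt) addr0 Dd_cofaces.
rewrite (bigD1 j) /=; last by rewrite jNt Djoin_sub_hop.
rewrite big1 => [|y /andP[_ yj]]; last first.
  by rewrite ffunE !inE (negbTE jNt) [j == y]eq_sym (negbTE yj) andbF mulr0.
by rewrite ffunE !inE eqxx it orbT setU1K // signrMK addr0.
Qed.

Lemma Dhop_correction f t : i \in t -> (f - D (Dhop f)) t = Dhop (D f) t.
Proof. by move=> it; rewrite cochainB -(Dhop_homotopy f it) addrAC subrr add0r. Qed.

Lemma Dhop_supp_within (Q Q' : {set 'I_n} -> Prop) f :
    (forall t, i \in t -> j \in t -> Q (t :\ j) -> Q' t) ->
  supp_within Q f -> supp_within Q' (Dhop f).
Proof.
move=> QQ' fQ t; rewrite ffunE; case: ifP => [/andP[it jt]|]; last by rewrite eqxx.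
by rewrite mulf_eq0 negb_or => /andP[_ /fQ]; apply: QQ'.
Qed.

Lemma Dhop_homog k f : homog W c k f -> homog W c (k - 1) (Dhop f).
Proof.
apply: Dhop_supp_within => t it jt <-; have itj : i \in t :\ j by rewrite in_setD1 ij.
by rewrite -{1}(setD1K jt) Ddeg_setU1 ?setD11 ?Djoin_sub_hop.
Qed.

Lemma Dhop_supported (P : pred 'I_n) f : P j -> supported P f -> supported P (Dhop f).
Proof.
move=> Pj; apply: Dhop_supp_within => t _ jt /subsetP tjP.
apply/subsetP => x; case: (eqVneq x j) => [-> //|xj xt].
by apply: tjP; rewrite in_setD1 xj.
Qed.

End Homotopy.

Definition rel_quasi_iso (P Q : pred 'I_n) : Prop :=
  forall k : int,
  (forall z, homog W c k z -> supported Q z -> D z = 0 ->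
     exists z' w, [/\ homog W c k z', supported P z', D z' = 0,
                      homog W c (k - 1) w & z - z' = D w])
  /\
  (forall z, homog W c k z -> supported P z -> D z = 0 ->
     forall w, homog W c (k - 1) w -> supported Q w -> z = D w ->
     exists w', [/\ homog W c (k - 1) w', supported P w' & z = D w']).

Lemma supported_sub (P Q : pred 'I_n) f : {subset P <= Q} -> supported P f -> supported Q f.
Proof. by move=> PQ fP t /fP /subsetP tP; apply/subsetP => x /tP /PQ. Qed.

Lemma rel_quasi_iso_id (P Q : pred 'I_n) : {subset Q <= P} -> rel_quasi_iso P Q.
Proof.
move=> QP k; split=> [z hz zQ dz | z hz zP dz w hw wQ ->].
  exists z, 0; split; rewrite ?Dd0 ?subrr //; last exact: supp_within0.
  exact: supported_sub zQ.
by exists w; split=> //; apply: supported_sub wQ.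
Qed.

Lemma rel_quasi_iso_trans (P Q R : pred 'I_n) : {subset P <= Q} ->
  rel_quasi_iso P Q -> rel_quasi_iso Q R -> rel_quasi_iso P R.
Proof.
move=> PQ PQqi QRqi k; have [surjPQ injPQ] := PQqi k; have [surjQR injQR] := QRqi k.
split=> [z hz zR dz | z hz zP dz w hw wR zw].
  have [z1 [w1 [hz1 z1Q dz1 hw1 e1]]] := surjQR z hz zR dz.
  have [z2 [w2 [hz2 z2P dz2 hw2 e2]]] := surjPQ z1 hz1 z1Q dz1.
  exists z2, (w1 + w2); split; rewrite ?DdD -?e1 -?e2 ?subrKA //.
  exact: supp_withinD.
have [w1 [hw1 w1Q e1]] := injQR z hz (supported_sub PQ zP) dz w hw wR zw.
exact: injPQ e1.
Qed.

Section DropOne.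
Variables (P Q : pred 'I_n) (i j : 'I_n).
Hypotheses (ij : i != j) (sub_ij : (W :&: c i <= c j)%VS).
Hypotheses (PQ : {subset P <= Q}) (QiP : {subset Q <= predU1 i P}).
Hypotheses (NPi : ~~ P i) (Pj : P j).

Let supported_drop f : supported Q f -> (forall t, i \in t -> f t = 0) -> supported P f.
Proof.
move=> fQ fi t ft; have iNt : i \notin t by apply: contra ft => /fi ->.
apply/subsetP => x xt; have /QiP := subsetP (fQ t ft) x xt.
by rewrite !inE => /predU1P[xi|//]; rewrite -xi xt in iNt.
Qed.

Lemma Dhop_correction_homog k f : homog W c k f -> homog W c k (f - D (Dhop i j f)).
Proof.
move=> hf; apply: supp_withinB (hf) _.
by have := Dd_homog (Dhop_homog ij sub_ij hf); rewrite subrK.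
Qed.

Lemma Dhop_correction_supported f : supported Q f -> supported Q (f - D (Dhop i j f)).
Proof. by move=> fQ; exact: supp_withinB fQ (Dd_supported (Dhop_supported (PQ Pj) fQ)). Qed.

Lemma rel_quasi_iso_drop : rel_quasi_iso P Q.
Proof.
move=> k; split=> [z hz zQ dz | z hz zP dz w hw wQ zw].
  exists (z - D (Dhop i j z)), (Dhop i j z); split.
  - exact: Dhop_correction_homog.
  - apply: supported_drop (Dhop_correction_supported zQ) _ => t it.
    by rewrite Dhop_correction // dz; rewrite ffunE; case: ifP; rewrite ?ffunE ?mulr0.
  - by rewrite DdB dz DdK subrr.
  - exact: Dhop_homog.
  - by rewrite opprB addrC subrK.
exists (w - D (Dhop i j w)); split.
- exact: Dhop_correction_homog.
- apply: supported_drop (Dhop_correction_supported wQ) _ => t it.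
  rewrite Dhop_correction // -zw ffunE it /=; case: ifP => // jt.
  suff -> : z (t :\ j) = 0 by rewrite mulr0.
  apply/eqP; apply: contraNT NPi => /zP /subsetP; apply.
  by rewrite in_setD1 ij.
- by rewrite DdB -zw DdK subr0.
Qed.

End DropOne.

Lemma rel_quasi_iso_retract (P Q : pred 'I_n) :
    (forall i, ~~ P i -> exists2 j, P j & (i != j) && (W :&: c i <= c j)%VS) ->
  {subset P <= Q} -> rel_quasi_iso P Q.
Proof.
move=> retr; have [m] := ubnP #|[predD Q & P]|; elim: m Q => // m IHm Q ltQPm PQ.
have [i /andP[NPi Qi] | noQP] := pickP [predD Q & P]; last first.
  by apply: rel_quasi_iso_id => x Qx; apply: contraFT (noQP x) => NPx; rewrite !inE NPx.
have [j Pj /andP[ij sub_ij]] := retr i NPi.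
pose Q' := [predD1 Q & i].
have PQ' : {subset P <= Q'}.
  by move=> x Px; rewrite !inE PQ // andbT; apply: contraNneq NPi => <-.
have cardQP : #|[predD Q & P]| = #|[predD Q' & P]|.+1.
  rewrite (cardD1 i) !inE NPi Qi add1n; congr _.+1.
  by apply: eq_card => x; rewrite !inE andbCA.
apply: rel_quasi_iso_trans (PQ') (IHm Q' _ (PQ')) _; first by rewrite -ltnS -cardQP.
apply: rel_quasi_iso_drop ij sub_ij _ _ _ (PQ' _ Pj).
- by move=> x; rewrite !inE => /andP[].
- by move=> x Qx; rewrite /Q' /= !inE Qx andbT orbN.
- by rewrite /Q' /= eqxx.
Qed.

Lemma incl_quasi_iso_rel (P : pred 'I_n) : rel_quasi_iso P predT -> incl_quasi_iso W c P.
Proof.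
have allT f : supported predT f by move=> s _; apply/subsetP.
move=> PTqi k; have [surj inj] := PTqi k; split=> [z hz dz | z hz zP dz w hw zw].
  exact: surj z hz (allT z) dz.
exact: inj z hz zP dz w hw (allT w) zw.
Qed.

End DComplex.

Lemma proper_subv_dim (K : fieldType) (vT : vectType K) (U V : {vspace vT}) :
  proper_subv U V -> (\dim U < \dim V)%N.
Proof.
by case/andP=> UV UnV; have [le eq] := dimv_leqif_eq UV; rewrite ltn_neqAle le eq UnV.
Qed.

Lemma exists_maximal_above (K : fieldType) (vT : vectType K) (n : nat)
    (c : 'I_n -> {vspace vT}) (i : 'I_n) :
  exists2 j, (c i <= c j)%VS & forall k, ~~ proper_subv (c j) (c k).
Proof.
have [j cij jmax] :=
  @arg_maxnP _ i (fun k => (c i <= c k)%VS) (fun k => \dim (c k)) (subvv _).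
exists j => // k; apply/negP => cjk.
have cik : (c i <= c k)%VS by apply: subv_trans cij _; case/andP: cjk.
by move: (jmax k cik); rewrite /= leqNgt proper_subv_dim.
Qed.

Theorem corollary2p2 (R : realType) (l : nat)
  (A : seq {vspace Cspace R l}) (x0 : {vspace Cspace R l})
  (t : seq {vspace Cspace R l}) :
  subspace_arrangement A -> x0 \in A ->
  uniq t -> t =i [seq (x0 :&: y)%VS | y <- A & y != x0] ->
  incl_quasi_iso x0 (fun i : 'I_(size t) => nth 0%VS t i)
    (fun i : 'I_(size t) => ~~ has (proper_subv (nth 0%VS t i)) t).
Proof.
move=> _ _ _ _; set c := fun i : 'I_(size t) => nth 0%VS t i.
apply/incl_quasi_iso_rel/rel_quasi_iso_retract => // i NPi.
have [j cij jmax] := exists_maximal_above c i.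
have Pj : ~~ has (proper_subv (c j)) t.
  by apply/(has_nthP 0%VS) => -[k ltk]; apply/negP/(jmax (Ordinal ltk)).
exists j => //; rewrite (subv_trans (capvSr _ _) cij) andbT.
by apply: contraNneq NPi => ->.
Qed.
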